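(* With the setup in the context, let $X\subseteq E\setminus B$, $\mathbf{M}\in A^X$, $\mathbf{w}\in D_{X,\mathbf{M}}$, $Y\subseteq E$ and $\mathbf{t}=\mathbf{w}_Y$. Then $\left|\{\mathbf{m}\in A^{E\setminus B}:\ \Omega_{\mathbf{t},Y,\mathbf{M}}(\mathbf{m})\neq\emptyset\}\right|=|A|^{\,n-k-|X|-\rho_X(Y)}.$
   Context: An almost affine code over a finite alphabet $A$ of length $n$ and dimension $k$ is a subset $C\subseteq A^n$ with $|C|=|A|^k$ such that for every $X\subseteq E=\{1,\dots,n\}$, $\log_{|A|}|C_X|$ is a nonnegative integer ($C_X$ = projection onto coordinates $X$); its associated matroid $M_C$ has rank function $r(X)=\log_{|A|}|C_X|$. Setup: $C$ is an almost affine code of length $n$ and dimension $k$ over $A$ with matroid rank function $r$; $B\subseteq E$ is a basis of $M_C$; $\varphi:A\times A\to A$ is such that for every $y\in A$ both $\varphi(y,\cdot)$ and $\varphi(\cdot,y)$ are bijections. For $\mathbf{m}\in A^{E\setminus B}$, $\Phi_{\mathbf{m}}(\mathbf{w})_i=\mathbf{w}_i$ for $i\in B$ and $=\varphi(\mathbf{w}_i,\mathbf{m}_i)$ for $i\in E\setminus B$, and $C_{\mathbf{m}}=\Phi_{\mathbf{m}}(C)$ (an almost affine code with the same matroid $M_C$; the $C_{\mathbf{m}}$ partition $A^E$). For $X\subseteq E\setminus B$, $\mathbf{M}\in A^X$: $D_{X,\mathbf{M}}=\bigcup_{\mathbf{m}_X=\mathbf{M}}C_{\mathbf{m}}$, an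 almost affine code with rank function $r_{D}(Y)=|Y\setminus(B\cup X)|+r(Y\cap(B\cup X))$, and $\rho_X(Y)=r_D(Y)-r(Y)$. For $\mathbf{t}\in A^Y$ and $\mathbf{m}\in A^{E\setminus B}$: $\Omega_{\mathbf{t},Y,\mathbf{M}}(\mathbf{m})=\emptyset$ if $\mathbf{m}_X\neq\mathbf{M}$, and $\Omega_{\mathbf{t},Y,\mathbf{M}}(\mathbf{m})=\{\mathbf{w}\in C_{\mathbf{m}}:\mathbf{w}_Y=\mathbf{t}\}$ otherwise. *)

From mathcomp Require Import all_boot.
Set Implicit Arguments. Unset Strict Implicit. Unset Printing Implicit Defensive.

Section AlmostAffine.
Variables (A : finType) (n : nat).

(* Words of length n over A: functions E = 'I_n -> A. *)
Definition word := {ffun 'I_n -> A}.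

Definition restr (X : {set 'I_n}) (w : word) : {ffun 'I_n -> option A} :=
  [ffun i => if i \in X then Some (w i) else None].

Definition proj (C : {set word}) (X : {set 'I_n}) := restr X @: C.

Definition crank (C : {set word}) (X : {set 'I_n}) : nat :=
  trunc_log #|A| #|proj C X|.

Definition almost_affine (k : nat) (C : {set word}) : Prop :=
  #|C| = #|A| ^ k /\ forall X : {set 'I_n}, exists r : nat, #|proj C X| = #|A| ^ r.

Definition is_basis (C : {set word}) (B : {set 'I_n}) : Prop :=
  crank C B = #|B| /\ #|B| = crank C setT.

Definition quasigroup_op (phi : A -> A -> A) : Prop :=
  forall y : A, bijective (phi y) /\ bijective (phi^~ y).

Definition msg (B : {set 'I_n}) := {ffun {i : 'I_n | i \notin B} -> A}.
Definition xmsg (X : {set 'I_n}) := {ffun {i : 'I_n | i \in X} -> A}.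

Definition Phi (B : {set 'I_n}) (phi : A -> A -> A) (m : msg B) (w : word) : word :=
  [ffun i => if (insub i : option {j : 'I_n | j \notin B}) is Some j
             then phi (w i) (m j) else w i].

Definition Cm (B : {set 'I_n}) (phi : A -> A -> A) (C : {set word}) (m : msg B) :
  {set word} := Phi phi m @: C.

Definition agree (B X : {set 'I_n}) (m : msg B) (M : xmsg X) : bool :=
  [forall j : {i : 'I_n | i \in X},
     if (insub (val j) : option {i : 'I_n | i \notin B}) is Some j'
     then m j' == M j else false].

Definition Dcode (B : {set 'I_n}) (phi : A -> A -> A) (C : {set word})
  (X : {set 'I_n}) (M : xmsg X) : {set word} :=
  \bigcup_(m : msg B | agree m M) Cm phi C m.

Definition rho (B : {set 'I_n}) (phi : A -> A -> A) (C : {set word})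
  (X : {set 'I_n}) (M : xmsg X) (Y : {set 'I_n}) : nat :=
  crank (Dcode B phi C M) Y - crank C Y.

Definition Omega (B : {set 'I_n}) (phi : A -> A -> A) (C : {set word})
  (t : {ffun 'I_n -> option A}) (Y : {set 'I_n}) (X : {set 'I_n}) (M : xmsg X)
  (m : msg B) : {set word} :=
  if agree m M then [set w' in Cm phi C m | restr Y w' == t] else set0.

End AlmostAffine.

(* Write w = Phi_m0(c0).  A message m with m_X = M is good exactly when some
   codeword c agrees with c0 on Z = Y ∩ (B ∪ X) and, on Q = Y \ (B ∪ X),
   m_i is the phi-quotient of w_i by c_i; the coordinates of
   R = E \ (B ∪ X ∪ Y) are unconstrained.  Take a basis I of Z in M_C and
   extend it to a basis I' of Y: every pattern on a free set is attained by a
   codeword, and a codeword is determined on Y by its values on I', so the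
   codewords agreeing with c0 on Z are parametrised by their values on
   I' \ I.  Hence there are |A|^(|R| + |I'| - |I|) good messages.  Likewise
   r(Y) = |I'|, r_D(Y) = |Q| + |I|, and n - k = |R| + |X| + |Q|. *)

From mathcomp Require Import all_boot.
From Stdlib Require Import Classical_Prop.
From mathcomp Require Import zify.
Set Implicit Arguments. Unset Strict Implicit. Unset Printing Implicit Defensive.

Section ImsetCard.
Variables (T U V : finType) (D : {set T}) (f : T -> U) (g : T -> V).

Definition finer := {in D &, forall x y, g x = g y -> f x = f y}.

Lemma card_imset_pair :
  finer -> #|[set (f x, g x) | x in D]| = #|g @: D|.
Proof.
move=> gf; have -> : g @: D = snd @: [set (f x, g x) | x in D].
  by rewrite -imset_comp; apply: eq_imset.
rewrite [RHS]card_in_imset // => p q /imsetP[x xD ->] /imsetP[y yD ->] /= e.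
by rewrite (gf x y xD yD e) e.
Qed.

Lemma leq_card_imset_finer : finer -> #|f @: D| <= #|g @: D|.
Proof.
move=> gf; rewrite -(card_imset_pair gf).
have -> : f @: D = fst @: [set (f x, g x) | x in D].
  by rewrite -imset_comp; apply: eq_imset.
exact: leq_imset_card.
Qed.

Lemma finer_eq_card_imset :
  finer -> #|f @: D| = #|g @: D| -> {in D &, forall x y, f x = f y -> g x = g y}.
Proof.
move=> gf fg x y xD yD fxy.
have injf : {in [set (f x, g x) | x in D] &, injective fst}.
  apply/imset_injP; rewrite (card_imset_pair gf) -fg -imset_comp.
  by apply/eqP/eq_card => z; congr (z \in _); apply: eq_imset.
by have [] := injf (f x, g x) (f y, g y) (imset_f _ xD) (imset_f _ yD) fxy.
Qed.

End ImsetCard.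

Lemma eq_card_imset_kernel (T U V : finType) (D : {set T}) (f : T -> U) (g : T -> V) :
  {in D &, forall x y, f x = f y <-> g x = g y} -> #|f @: D| = #|g @: D|.
Proof.
move=> fg; apply/eqP; rewrite eqn_leq !leq_card_imset_finer //.
  by move=> x y xD yD /fg; apply.
by move=> x y xD yD /fg; apply.
Qed.

Lemma card_setU_disjoint (T : finType) (S S' : {set T}) :
  S :&: S' = set0 -> #|S :|: S'| = #|S| + #|S'|.
Proof. by move=> SS'; rewrite cardsU SS' cards0 subn0. Qed.

Section Code.
Variables (A : finType) (n : nat).
Implicit Types (C : {set word A n}) (S : {set 'I_n}) (x y z : word A n).

Definition agreeon S x y := [forall i in S, x i == y i].

Lemma agreeonP S x y : reflect (forall i, i \in S -> x i = y i) (agreeon S x y).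
Proof. by apply: (iffP forall_inP) => H i iS; apply/eqP/H. Qed.

Lemma agreeonE S x y : agreeon S x y -> forall i, i \in S -> x i = y i.
Proof. by move/agreeonP. Qed.

Lemma restr_eq S x y : (restr S x == restr S y) = agreeon S x y.
Proof.
apply/eqP/agreeonP => [H i iS | H].
  by have := congr1 (fun f : {ffun 'I_n -> option A} => f i) H; rewrite !ffunE iS => -[].
by apply/ffunP => i; rewrite !ffunE; case: ifP => // iS; rewrite H.
Qed.

Lemma agreeon_sub S S' x y : S \subset S' -> agreeon S' x y -> agreeon S x y.
Proof. by move=> /subsetP sS /agreeonP H; apply/agreeonP => i /sS; apply: H. Qed.

Lemma agreeonU S S' x y : agreeon S x y -> agreeon S' x y -> agreeon (S :|: S') x y.
Proof.
by move=> /agreeonP H /agreeonP H'; apply/agreeonP => i; rewrite inE => /orP[/H|/H'].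
Qed.

Lemma agreeon_sym S x y : agreeon S x y = agreeon S y x.
Proof. by apply/agreeonP/agreeonP => H i /H. Qed.

Lemma agreeon_trans S x y z : agreeon S x y -> agreeon S y z -> agreeon S x z.
Proof. by move=> /agreeonP H /agreeonP H'; apply/agreeonP => i iS; rewrite H // H'. Qed.

Lemma agreeon0 x y : agreeon set0 x y.
Proof. by apply/agreeonP => i; rewrite inE. Qed.

Definition determines C S S' := {in C &, forall c c', agreeon S c c' -> agreeon S' c c'}.

Lemma determines_trans C S1 S2 S3 :
  determines C S1 S2 -> determines C S2 S3 -> determines C S1 S3.
Proof. by move=> d12 d23 c c' cC c'C /(d12 _ _ cC c'C) /(d23 _ _ cC c'C). Qed.

Lemma leq_card_proj C S S' : S \subset S' -> #|proj C S| <= #|proj C S'|.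
Proof.
move=> sS; apply: leq_card_imset_finer => c c' _ _ /eqP; rewrite restr_eq => H.
by apply/eqP; rewrite restr_eq; apply: agreeon_sub H.
Qed.

Lemma card_proj_determines C S S' :
  S \subset S' -> determines C S S' -> #|proj C S| = #|proj C S'|.
Proof.
move=> sS dS; apply: eq_card_imset_kernel => c c' cC c'C.
split=> /eqP; rewrite !restr_eq => H; apply/eqP; rewrite restr_eq.
  exact: dS.
exact: agreeon_sub H.
Qed.

Lemma determines_card_proj C S S' :
  S \subset S' -> #|proj C S| = #|proj C S'| -> determines C S S'.
Proof.
move=> sS E c c' cC c'C; rewrite -!restr_eq => /eqP H; apply/eqP.
apply: (finer_eq_card_imset _ E cC c'C H) => d d' _ _ /eqP.
by rewrite !restr_eq => H'; apply/eqP; rewrite restr_eq; apply: agreeon_sub H'.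
Qed.

Lemma card_proj_setT C : #|proj C setT| = #|C|.
Proof.
apply: card_in_imset => c c' _ _ /eqP; rewrite restr_eq => /agreeonP H.
by apply/ffunP => i; apply: H; rewrite inE.
Qed.

Lemma card_restr_agreeon S I x0 :
  #|restr S @: [set x | agreeon I x x0]| = #|A| ^ #|S :\: I|.
Proof.
set K := S :\: I.
pose ext (g : {ffun {i : 'I_n | i \in K} -> A}) : word A n :=
  [ffun i => if insub i is Some j then g j else x0 i].
have -> : restr S @: [set x | agreeon I x x0] = (restr S \o ext) @: [set: {ffun _ -> A}].
  apply/setP => p; apply/imsetP/imsetP => [[x xin ->]|[g _ ->]].
  - exists [ffun j => x (val j)] => //; apply/eqP; rewrite /= restr_eq.
    apply/agreeonP => i iS; rewrite ffunE.
    case: insubP => [j jK vj|]; first by rewrite ffunE vj.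
    rewrite inE iS andbT negbK => iI.
    by move: xin; rewrite inE => /agreeonP ->.
  - exists (ext g) => //; rewrite inE; apply/agreeonP => i iI; rewrite ffunE.
    by case: insubP => // j; rewrite inE iI.
rewrite card_in_imset ?cardsT ?card_ffun ?card_sig //.
move=> g g' _ _ /= /eqP; rewrite restr_eq => /agreeonP H; apply/ffunP => j.
have jS : val j \in S by have := valP j; rewrite inE => /andP[].
by have := H _ jS; rewrite !ffunE valK.
Qed.

Lemma leq_card_proj_exp C S : #|proj C S| <= #|A| ^ #|S|.
Proof.
have [->|[c _]] := set_0Vmem C; first by rewrite /proj imset0 cards0.
rewrite -{2}(setD0 S) -(card_restr_agreeon S set0 c).
apply/subset_leq_card/subsetP => p /imsetP[c' _ ->].
by rewrite imset_f // inE agreeon0.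
Qed.

End Code.

Section Free.
Variables (A : finType) (n : nat) (C : {set word A n}).
Hypothesis hA : 1 < #|A|.
Hypothesis haff : forall S : {set 'I_n}, exists r, #|proj C S| = #|A| ^ r.
Implicit Types (S I J : {set 'I_n}) (x : word A n).

Definition free S := #|proj C S| = #|A| ^ #|S|.

Lemma free0 c : c \in C -> free set0.
Proof.
move=> cC; rewrite /free cards0 expn0; apply/eqP; rewrite eqn_leq.
have := leq_card_proj_exp C set0; rewrite cards0 expn0 => -> /=.
by rewrite card_gt0; apply/set0Pn; exists (restr set0 c); apply: imset_f.
Qed.

Lemma free_surj S : free S -> forall x, exists2 c, c \in C & agreeon S c x.
Proof.
move=> fS x; set all := restr S @: [set y | agreeon set0 y x].
have Eall : proj C S = all.
  apply/eqP; rewrite eqEcard fS card_restr_agreeon setD0 leqnn andbT.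
  by apply/subsetP => p /imsetP[c _ ->]; rewrite imset_f // inE agreeon0.
have : restr S x \in proj C S by rewrite Eall imset_f // inE agreeon0.
by case/imsetP => c cC /eqP; rewrite restr_eq agreeon_sym; exists c.
Qed.

Definition complete S x := odflt x [pick c in C | agreeon S c x].

Lemma completeP S x : free S -> complete S x \in C /\ agreeon S (complete S x) x.
Proof.
move=> fS; rewrite /complete; case: pickP => [c /andP[-> ->] // | none].
by have [c cC H] := free_surj fS x; have := none c; rewrite cC H.
Qed.

Lemma eq_complete S x x' :
  free S -> agreeon S x x' -> complete S x = complete S x'.
Proof.
move=> fS xx'; rewrite /complete.
have -> : [pick c in C | agreeon S c x] = [pick c in C | agreeon S c x'].
  apply: eq_pick => c /=; congr andb; apply/idP/idP => cS.
    exact: agreeon_trans cS xx'.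
  by apply: agreeon_trans cS _; rewrite agreeon_sym.
case: pickP => [//|none].
by have [c cC H] := free_surj fS x'; have := none c; rewrite cC H.
Qed.

Lemma free_setU1 J j : free J -> ~ determines C J [set j] -> free (j |: J).
Proof.
move=> fJ ndj.
have jJ : j \notin J.
  apply: contra_notN ndj => jJ c c' _ _ /agreeonP H; apply/agreeonP => i.
  by rewrite inE => /eqP ->; apply: H.
have sJ : J \subset j |: J by apply: subsetUr.
have [r Er] := haff (j |: J); rewrite /free Er cardsU1 jJ add1n.
have := leq_card_proj C sJ; rewrite Er fJ leq_exp2l // leq_eqVlt => /orP[/eqP rJ|].
  have dJ : determines C J (j |: J) by apply: determines_card_proj sJ _; rewrite Er fJ rJ.
  by case: ndj; apply: determines_trans dJ _ => c c' _ _; apply: agreeon_sub; apply: subsetUl.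
have := leq_card_proj_exp C (j |: J); rewrite Er cardsU1 jJ add1n leq_exp2l //.
by move=> rle rgt; congr (_ ^ _); apply/eqP; rewrite eqn_leq rle rgt.
Qed.

Lemma free_extend I S : free I -> I \subset S ->
  exists J, [/\ I \subset J, J \subset S, free J & determines C J S].
Proof.
move=> fI IS.
suff [J [IJ JS fJ dJ]] : exists J, [/\ I \subset J, J \subset S, free J
    & determines C J (I :|: [set i in enum S])].
  by exists J; split=> //; move: dJ; rewrite set_enum (setUidPr IS).
have : {subset enum S <= S} by move=> i; rewrite mem_enum.
elim: (enum S) => [|j s IHs] sS.
  exists I; split=> // c c' _ _; apply: agreeon_sub.
  by apply/subsetP => i; rewrite !inE orbF.
have [|J [IJ JS fJ dJ]] := IHs; first by move=> i si; apply: sS; rewrite inE si orbT.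
have Es : I :|: [set i in j :: s] = j |: (I :|: [set i in s]).
  by apply/setP => i; rewrite !inE orbCA.
rewrite Es; have [dj|ndj] := classic (determines C J [set j]).
  exists J; split=> // c c' cC c'C H.
  by rewrite setUC; apply: agreeonU; [apply: dJ | apply: dj].
exists (j |: J); split.
- exact: subset_trans IJ (subsetUr _ _).
- by rewrite subUset sub1set JS sS // inE eqxx.
- exact: free_setU1.
- move=> c c' cC c'C H; rewrite setUC; apply: agreeonU.
    by apply: dJ => //; apply: agreeon_sub H; apply: subsetUr.
  by apply: agreeon_sub H; rewrite subsetUl.
Qed.

Lemma card_proj_basis J S :
  J \subset S -> free J -> determines C J S -> #|proj C S| = #|A| ^ #|J|.
Proof. by move=> JS fJ dJ; rewrite -(card_proj_determines JS dJ). Qed.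

End Free.

Section Quasigroup.
Variables (A : finType) (phi : A -> A -> A).
Hypothesis hphi : quasigroup_op phi.

Definition ldiv a z := odflt z [pick y | phi a y == z].
Definition rdiv z y := odflt z [pick x | phi x y == z].

Lemma phi_injl y : injective (phi^~ y).
Proof. by case: (hphi y) => _ /bij_inj. Qed.

Lemma phi_injr a : injective (phi a).
Proof. by case: (hphi a) => /bij_inj. Qed.

Lemma ldivK a z : phi a (ldiv a z) = z.
Proof.
rewrite /ldiv; case: pickP => [y /eqP //|none].
by case: (hphi a) => -[g _ gK] _; have := none (g z); rewrite gK eqxx.
Qed.

Lemma phiK a y : ldiv a (phi a y) = y.
Proof. by apply: (@phi_injr a); rewrite ldivK. Qed.

Lemma rdivK z y : phi (rdiv z y) y = z.
Proof.
rewrite /rdiv; case: pickP => [x /eqP //|none].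
by case: (hphi y) => _ [g _ gK]; have := none (g z); rewrite /= gK eqxx.
Qed.

End Quasigroup.

Section Messages.
Variables (A : finType) (n : nat) (B X : {set 'I_n}) (d : word A n).
Hypothesis hX : X \subset ~: B.

(* The default word d only fills coordinates that are never read. *)
Definition msg_word (m : msg A B) : word A n :=
  [ffun i => if (insub i : option {j : 'I_n | j \notin B}) is Some j then m j else d i].

Definition xmsg_word (M : xmsg A X) : word A n :=
  [ffun i => if (insub i : option {j : 'I_n | j \in X}) is Some j then M j else d i].

Lemma msg_word_ffun (f : 'I_n -> A) i :
  i \notin B -> msg_word [ffun j => f (val j)] i = f i.
Proof.
move=> iB; rewrite ffunE.
by case: insubP => [j _ vj|]; [rewrite ffunE vj | rewrite iB].
Qed.

Lemma msg_word_inj (m m' : msg A B) :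
  (forall i, i \notin B -> msg_word m i = msg_word m' i) -> m = m'.
Proof.
move=> H; apply/ffunP => j; have := H _ (valP j).
by rewrite !ffunE valK.
Qed.

Lemma PhiE phi (m : msg A B) v i :
  Phi phi m v i = if i \in B then v i else phi (v i) (msg_word m i).
Proof.
rewrite !ffunE; case: insubP => [j jB vj|]; last by rewrite negbK => ->.
by case: ifP jB => // ->.
Qed.

Lemma agreeP (m : msg A B) (M : xmsg A X) :
  reflect (forall i, i \in X -> msg_word m i = xmsg_word M i) (agree m M).
Proof.
apply: (iffP forallP) => H.
  move=> i iX; have := H (Sub i iX); rewrite SubK.
  rewrite !ffunE (insubT (fun j => j \in X) iX) /=.
  by case: insubP => [j' _ _ /eqP -> // | ]; rewrite ?negbK.
move=> j; have := H _ (valP j); rewrite !ffunE valK.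
case: insubP => [j' _ _ -> //|]; rewrite negbK => jB.
by have := subsetP hX _ (valP j); rewrite inE jB.
Qed.

End Messages.

Lemma Phi_eq_agree (A : finType) (n : nat) (B X : {set 'I_n}) (phi : A -> A -> A)
    (m m' : msg A B) (M : xmsg A X) (c c' : word A n) i :
  quasigroup_op phi -> X \subset ~: B -> agree m M -> agree m' M -> i \in B :|: X ->
  (Phi phi m c i == Phi phi m' c' i) = (c i == c' i).
Proof.
move=> hphi hX /(agreeP c hX) am /(agreeP c hX) am'.
rewrite !(PhiE c) inE; case: (i \in B) => //= iX.
by rewrite am // am' // (inj_eq (@phi_injl _ _ hphi _)).
Qed.

Lemma OmegaP (A : finType) (n : nat) (C : {set word A n}) (B X Y : {set 'I_n})
  (phi : A -> A -> A) (M : xmsg A X) (w : word A n) (m : msg A B) :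
  reflect (agree m M /\ exists2 c, c \in C & agreeon Y (Phi phi m c) w)
          (Omega phi C (restr Y w) Y M m != set0).
Proof.
rewrite /Omega; case: (agree m M); last by rewrite eqxx; constructor => -[].
apply: (iffP idP) => [/set0Pn[v]|[_ [c cC H]]].
  by rewrite inE => /andP[/imsetP[c cC ->]]; rewrite restr_eq; split=> //; exists c.
by apply/set0Pn; exists (Phi phi m c); rewrite inE imset_f //= restr_eq.
Qed.

Lemma DcodeP (A : finType) (n : nat) (C : {set word A n}) (B X : {set 'I_n})
  (phi : A -> A -> A) (M : xmsg A X) v :
  reflect (exists m : msg A B, agree m M /\ exists2 c, c \in C & v = Phi phi m c)
          (v \in Dcode B phi C M).
Proof.
apply: (iffP bigcupP) => [[m am /imsetP[c cC ->]]|[m [am [c cC ->]]]].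
  by exists m; split=> //; exists c.
by exists m => //; apply: imset_f.
Qed.

Lemma agreeon_Phi (A : finType) (n : nat) (B X S : {set 'I_n}) (phi : A -> A -> A)
    (m m' : msg A B) (M : xmsg A X) (c c' : word A n) :
  quasigroup_op phi -> X \subset ~: B -> agree m M -> agree m' M -> S \subset B :|: X ->
  agreeon S (Phi phi m c) (Phi phi m' c') = agreeon S c c'.
Proof.
move=> hphi hX am am' /subsetP SBX.
apply/agreeonP/agreeonP => H i iS; apply/eqP; have := H i iS => /eqP;
  by rewrite (Phi_eq_agree _ _ hphi hX am am' (SBX i iS)).
Qed.

Section Counting.
Variables (A : finType) (n : nat) (C : {set word A n}) (B X Y : {set 'I_n}).
Variables (phi : A -> A -> A) (M : xmsg A X) (c0 : word A n) (m0 : msg A B).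
Hypothesis hA : 1 < #|A|.
Hypothesis hphi : quasigroup_op phi.
Hypothesis hX : X \subset ~: B.
Hypothesis c0C : c0 \in C.
Hypothesis am0 : agree m0 M.

Local Notation w := (Phi phi m0 c0).
Local Notation Z := (Y :&: (B :|: X)).
Local Notation Q := (Y :\: (B :|: X)).
Local Notation R := (~: B :\: (X :|: Y)).

Variables I I' : {set 'I_n}.
Hypotheses (IZ : I \subset Z) (fI : free C I) (dI : determines C I Z).
Hypotheses (II' : I \subset I') (I'Y : I' \subset Y) (fI' : free C I').
Hypothesis dI' : determines C I' Y.

Lemma agreeon_Z_Phi (m : msg A B) (c : word A n) :
  agree m M -> agreeon Z (Phi phi m c) w = agreeon Z c c0.
Proof. by move=> am; rewrite (agreeon_Phi _ _ hphi hX am am0 (subsetIr _ _)). Qed.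

Definition fiber := [set x : word A n | agreeon I x c0].

Local Notation cw x := (complete C I' x).

Lemma complete_fiber x : x \in fiber -> agreeon Z (cw x) c0.
Proof.
rewrite inE => xI; have [cC H] := completeP x fI'; apply: dI => //.
exact: agreeon_trans (agreeon_sub II' H) xI.
Qed.

(* A word x agreeing with c0 on I encodes a good message: its values on I'
   select the codeword cw x, its values on R are the free coordinates. *)
Definition msg_fun x i :=
  if i \in X then xmsg_word c0 M i else if i \in Y then ldiv phi (cw x i) (w i) else x i.

Definition msg_of x : msg A B := [ffun j => msg_fun x (val j)].

Lemma notin_B i : i \in X -> i \notin B.
Proof. by move/(subsetP hX); rewrite inE. Qed.

Lemma agree_msg_of x : agree (msg_of x) M.
Proof.
by apply/(agreeP c0 hX) => i iX; rewrite msg_word_ffun ?notin_B // /msg_fun iX.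
Qed.

Lemma Omega_msg_of x : x \in fiber -> Omega phi C (restr Y w) Y M (msg_of x) != set0.
Proof.
move=> xF; have [cC _] := completeP x fI'.
apply/OmegaP; split; first exact: agree_msg_of.
exists (cw x) => //; apply/agreeonP => i iY; case iBX: (i \in B :|: X).
  have := complete_fiber xF; rewrite -(agreeon_Z_Phi _ (agree_msg_of x)).
  by move/agreeonE; apply; rewrite inE iY iBX.
move: iBX; rewrite inE => /norP[iB iX].
by rewrite (PhiE c0) (negbTE iB) msg_word_ffun // /msg_fun (negbTE iX) iY ldivK.
Qed.

Lemma Omega_msg_ofP m :
  Omega phi C (restr Y w) Y M m != set0 -> exists2 x, x \in fiber & m = msg_of x.
Proof.
move=> /OmegaP [am [c cC cY]].
have cZ : agreeon Z c c0.
  by rewrite -(agreeon_Z_Phi c am); apply: agreeon_sub cY; apply: subsetIl.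
pose x : word A n := [ffun i => if i \in Y then c i else msg_word c0 m i].
have xF : x \in fiber.
  rewrite inE; apply/agreeonP => i iI; have iZ := subsetP IZ i iI.
  by move: (iZ); rewrite inE => /andP[iY _]; rewrite ffunE iY (agreeonE cZ).
have cwc : agreeon Y (cw x) c.
  have [cwC cwx] := completeP x fI'; apply: dI' => //; apply/agreeonP => i iI'.
  by rewrite (agreeonE cwx) // ffunE (subsetP I'Y i iI').
exists x => //; apply: (msg_word_inj (d:=c0)) => i iB.
rewrite msg_word_ffun // /msg_fun; case: ifP => iX.
  by move/(agreeP c0 hX): am => ->.
case: ifP => iY; last by rewrite [x i]ffunE iY.
by rewrite (agreeonE cwc iY) -(agreeonE cY iY) (PhiE c0) (negbTE iB) phiK.
Qed.

Lemma good_msgE :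
  [set m : msg A B | Omega phi C (restr Y w) Y M m != set0] = msg_of @: fiber.
Proof.
apply/setP => m; rewrite inE; apply/idP/imsetP => [/Omega_msg_ofP // | [x xF ->]].
exact: Omega_msg_of.
Qed.

Lemma msg_of_kernel : {in fiber &, forall x x',
  msg_of x = msg_of x' <-> restr (R :|: I') x = restr (R :|: I') x'}.
Proof.
move=> x x' xF x'F; split => [E | /eqP]; last first.
  rewrite restr_eq => H; apply/ffunP => j.
  rewrite !ffunE /msg_fun (eq_complete fI' (agreeon_sub (subsetUr _ _) H)).
  case: ifP => // jX; case: ifP => // jY.
  by apply: (agreeonE H); rewrite !inE jX jY (valP j).
have {}E i : i \notin B -> msg_fun x i = msg_fun x' i.
  by move=> iB; have := congr1 (fun m => msg_word c0 m i) E; rewrite !msg_word_ffun.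
apply/eqP; rewrite restr_eq; apply: agreeonU.
  apply/agreeonP => i; rewrite !inE negb_or => /andP[/andP[iX iY] iB].
  by have := E i iB; rewrite /msg_fun (negbTE iX) (negbTE iY).
have cwY : agreeon Y (cw x) (cw x').
  apply/agreeonP => i iY; case iBX: (i \in B :|: X).
    have iZ : i \in Z by rewrite inE iY iBX.
    by rewrite (agreeonE (complete_fiber xF) iZ) (agreeonE (complete_fiber x'F) iZ).
  move: iBX; rewrite inE => /norP[iB iX].
  have := E i iB; rewrite /msg_fun (negbTE iX) iY => e.
  by apply: (@phi_injl _ _ hphi (ldiv phi (cw x i) (w i))); rewrite {2}e !ldivK.
have [_ cwx] := completeP x fI'; have [_ cwx'] := completeP x' fI'.
apply/agreeonP => i iI'.
rewrite -(agreeonE cwx iI') -(agreeonE cwx' iI').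
exact: (agreeonE cwY (subsetP I'Y i iI')).
Qed.

Lemma card_good_msg :
  #|[set m : msg A B | Omega phi C (restr Y w) Y M m != set0]|
  = #|A| ^ #|(R :|: I') :\: I|.
Proof. by rewrite good_msgE (eq_card_imset_kernel msg_of_kernel) card_restr_agreeon. Qed.

Lemma I_sub_BX : I \subset B :|: X.
Proof. exact: subset_trans IZ (subsetIr _ _). Qed.

Lemma QI_sub_Y : Q :|: I \subset Y.
Proof. by rewrite subUset subsetDl (subset_trans IZ (subsetIl _ _)). Qed.

Lemma Dcode_kernel : {in Dcode B phi C M &, forall v v',
  restr Y v = restr Y v' <-> restr (Q :|: I) v = restr (Q :|: I) v'}.
Proof.
move=> v v' vD v'D; rewrite !(rwP eqP) !restr_eq.
split; first exact: agreeon_sub QI_sub_Y.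
move: vD v'D => /DcodeP[m [am [c cC ->]]] /DcodeP[m' [am' [c' c'C ->]]] H.
have cI : agreeon I c c'.
  rewrite -(agreeon_Phi _ _ hphi hX am am' I_sub_BX).
  exact: agreeon_sub (subsetUr _ _) H.
have vZ := dI cC c'C cI; rewrite -(agreeon_Phi _ _ hphi hX am am' (subsetIr _ _)) in vZ.
apply/agreeonP => i iY; case iBX: (i \in B :|: X).
  by apply: (agreeonE vZ); rewrite inE iY iBX.
by apply: (agreeonE H); rewrite !inE iY -in_setU iBX.
Qed.

Lemma Dcode_restr_surj x : exists2 v, v \in Dcode B phi C M & agreeon (Q :|: I) v x.
Proof.
pose x1 : word A n :=
  [ffun i => if i \in B then x i else rdiv phi (x i) (xmsg_word c0 M i)].
have [c cC cx1] := free_surj fI x1.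
pose m : msg A B := [ffun j =>
  (fun i => if i \in X then xmsg_word c0 M i else ldiv phi (c i) (x i)) (val j)].
have am : agree m M.
  by apply/(agreeP c0 hX) => i iX; rewrite msg_word_ffun ?notin_B // iX.
exists (Phi phi m c); first by apply/DcodeP; exists m; split=> //; exists c.
apply/agreeonP => i; rewrite inE => /orP[|iI].
  rewrite !inE negb_or => /andP[/andP[iB iX] _].
  by rewrite (PhiE c0) (negbTE iB) msg_word_ffun // (negbTE iX) ldivK.
rewrite (PhiE c0) (agreeonE cx1 iI) [x1 i]ffunE.
case: ifPn => iB; first by rewrite iB.
rewrite (negbTE iB).
have iX : i \in X by move: (subsetP I_sub_BX i iI); rewrite inE (negbTE iB).
by rewrite msg_word_ffun // iX rdivK.
Qed.

Lemma card_proj_Dcode : #|proj (Dcode B phi C M) Y| = #|A| ^ #|Q :|: I|.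
Proof.
rewrite (eq_card_imset_kernel Dcode_kernel).
have := card_restr_agreeon (Q :|: I) set0 c0; rewrite setD0 => <-.
apply: eq_card => p; apply/imsetP/imsetP => [[v _ ->]|[x _ ->]].
  by exists v => //; rewrite inE agreeon0.
have [v vD vx] := Dcode_restr_surj x.
by exists v => //; apply/eqP; rewrite eq_sym restr_eq.
Qed.

Lemma determines_QI_Y : determines C (Q :|: I) Y.
Proof.
move=> c c' cC c'C H; have cZ := dI cC c'C (agreeon_sub (subsetUr _ _) H).
apply/agreeonP => i iY; case iBX: (i \in B :|: X).
  by apply: (agreeonE cZ); rewrite inE iY iBX.
by apply: (agreeonE H); rewrite !inE iY -in_setU iBX.
Qed.

Lemma leq_card_I'_QI : #|I'| <= #|Q :|: I|.
Proof.
rewrite -(leq_exp2l _ _ hA) -(card_proj_basis I'Y fI' dI').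
rewrite -(card_proj_determines QI_sub_Y determines_QI_Y).
exact: leq_card_proj_exp.
Qed.

Lemma card_nonbasis_split : #|R| + #|X| + #|Q| = n - #|B|.
Proof.
have <- : #|~: B| = n - #|B| by rewrite cardsCs setCK card_ord.
rewrite -(cardsID X (~: B)) (setIidPr hX) -(cardsID Y (~: B :\: X)).
have -> : (~: B :\: X) :&: Y = Q.
  by apply/setP => i; rewrite !inE; case: (i \in B); case: (i \in X); case: (i \in Y).
have -> : (~: B :\: X) :\: Y = R.
  by apply/setP => i; rewrite !inE; case: (i \in B); case: (i \in X); case: (i \in Y).
lia.
Qed.

Lemma card_good_msg_rho :
  #|[set m : msg A B | Omega phi C (restr Y w) Y M m != set0]|
  = #|A| ^ (n - #|B| - #|X| - rho B phi C M Y).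
Proof.
have crC : crank C Y = #|I'| by rewrite /crank (card_proj_basis I'Y fI' dI') trunc_expnK.
have crD : crank (Dcode B phi C M) Y = #|Q :|: I| by rewrite /crank card_proj_Dcode trunc_expnK.
have QI : #|Q :|: I| = #|Q| + #|I|.
  apply: card_setU_disjoint; apply/setP => i; rewrite !inE.
  by case: (boolP (i \in I)) => iI; rewrite ?andbF // -in_setU (subsetP I_sub_BX) ?andbF.
have RI' : #|(R :|: I') :\: I| = #|R| + #|I'| - #|I|.
  rewrite cardsDS ?(subset_trans II' (subsetUr _ _)) // card_setU_disjoint //.
  apply/setP => i; rewrite !inE; case: (boolP (i \in I')) => iI'; rewrite ?andbF //.
  by rewrite (subsetP I'Y) ?orbT.
have leII' := subset_leq_card II'.
have := leq_card_I'_QI; have := card_nonbasis_split.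
rewrite card_good_msg RI' /rho crC crD QI => nB le; congr (_ ^ _); lia.
Qed.

End Counting.

Theorem mainTheorem9 (A : finType) (n k : nat) (C : {set word A n})
  (hA : 1 < #|A|) (hC : almost_affine k C)
  (B : {set 'I_n}) (hB : is_basis C B)
  (phi : A -> A -> A) (hphi : quasigroup_op phi)
  (X : {set 'I_n}) (hX : X \subset ~: B) (M : xmsg A X)
  (w : word A n) (hw : w \in Dcode B phi C M)
  (Y : {set 'I_n}) :
  #|[set m : msg A B | Omega phi C (restr Y w) Y M m != set0]|
  = #|A| ^ (n - k - #|X| - rho B phi C M Y).
Proof.
have [hCk haff] := hC.
have kB : #|B| = k by rewrite hB.2 /crank card_proj_setT hCk trunc_expnK.
have /DcodeP [m0 [am0 [c0 c0C ->]]] := hw.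
have [I [_ IZ fI dI]] := free_extend hA haff (free0 c0C) (sub0set (Y :&: (B :|: X))).
have IY : I \subset Y := subset_trans IZ (subsetIl _ _).
have [I' [II' I'Y fI' dI']] := free_extend hA haff fI IY.
by rewrite -kB (card_good_msg_rho hA hphi hX c0C am0 IZ fI dI II' I'Y fI' dI').
Qed.
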